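(* Let $<:$ be the subtyping relation on types described in the context. Then the following hold. (1) For every type $T$: if $\mathtt{HL} <: T$ then $T=\mathtt{HL}$. (2) For every type $T$: if $\mathtt{LL} <: T$ then $T=\mathtt{LL}$ or $T=\mathtt{HL}$. (3) For every type $T$: if $\mathtt{HH} <: T$ then $T=\mathtt{HH}$ or $T=\mathtt{HL}$. (4) For all types $T_1,T_2,T_3$: if $T_1 * T_2 <: T_3$ then $T_3\in\{\mathtt{LL},\mathtt{HL},\mathtt{HH}\}$ or there exist types $T_4,T_5$ with $T_3=T_4*T_5$. (5) For all types $T,T_1,T_2$: if $T <: T_1*T_2$ then there exist $T_1',T_2'$ with $T=T_1'*T_2'$, $T_1'<: T_1$ and $T_2'<: T_2$. (6) For all $T_1,T_2$: if $T_1*T_2 <: \mathtt{LL}$ then $T_1<:\mathtt{LL}$ and $T_2<:\mathtt{LL}$. (7) For all $T_1,T_2$: if $T_1*T_2 <: \mathtt{HH}$ then $T_1<:\mathtt{HH}$ or $T_2<:\mathtt{HH}$. (8) For all $T_1,T_2$ and keys $k$: if $T_1 <: (T_2)_k$ then there exists $T_3<: T_2$ with $T_1=(T_3)_k$. (9) For all $T_1,T_2$ and keys $k$: if $T_1 <: \{T_2\}_k$ then there exists $T_3<: T_2$ with $T_1=\{T_3\}_k$. (10) For all $T_1,T_2$ and keys $k$: if $(T_1)_k <: T_2$ then $T_2=\mathtt{HL}$, or there exists $T_3$ with $T_1<: T_3$ and $T_2=(T_3)_k$. (11) For all $T_1,T_2$ and keys $k$: if $\{T_1\}_k <: T_2$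 then $T_2=\mathtt{HL}$, or there exists $T_3$ with $T_1<: T_3$ and $T_2=\{T_3\}_k$. (12) For every type $T$ and every refinement type $R=\llbracket \tau^{l,a}_m ; \tau^{l',a}_n\rrbracket$: if $T<: R$ then $T=R$. (13) For every type $T$ and every refinement type $R=\llbracket \tau^{l,a}_m ; \tau^{l',a}_n\rrbracket$: if $R<: T$ then $T=\mathtt{HL}$ or $T=R$. (14) For all types $T_1,T_2$: if $T_1<: T_2$ then $T_2=\mathtt{HL}$, or $T_1=T_2$, or neither $T_1$ nor $T_2$ is a union type (i.e. of the form $T'\vee T''$). (15) For all types $T,T'$ and labels $l$: if $T<: \mathrm{key}^l(T')$ then $T=\mathrm{key}^l(T')$. (16) For every type $T$: if $T<:\mathtt{LL}$ then $T$ is a pair type (of the form $T'*T''$), or $T=\mathrm{key}^{\mathtt{LL}}(T')$ for some $T'$, or $T=\mathtt{LL}$. (17) For every type $T$: if $T<:\mathtt{HH}$ then $T$ is a pair type, or $T=\mathrm{key}^{\mathtt{HH}}(T')$ for some $T'$, or $T=\mathtt{HH}$.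
   Context: Security labels are $l\in\{\mathtt{LL},\mathtt{HL},\mathtt{HH}\}$. Fix a set of names and a set of keys. Types are generated by the grammar $T ::= l \mid T*T \mid \mathrm{key}^l(T) \mid (T)_k \mid \{T\}_k \mid \llbracket \tau^{l,a}_m ; \tau^{l',a}_n\rrbracket \mid T\vee T$, where $k$ ranges over keys, $m,n$ over names, $a\in\{1,\infty\}$, and $\tau^{l,a}_n$ is a nonce type; types of the form $T'*T''$ are called pair types, types $\llbracket \tau^{l,a}_m ; \tau^{l',a}_n\rrbracket$ refinement types, and types $T'\vee T''$ union types. The subtyping relation $<:$ is the smallest binary relation on types closed under the rules: $T<: T$; $T<:\mathtt{HL}$; if $T<: T'$ and $T'<: T''$ then $T<: T''$; $\mathtt{LL}*\mathtt{LL}<:\mathtt{LL}$; if $T_1<: T_1'$ and $T_2<: T_2'$ then $T_1*T_2<: T_1'*T_2'$; $\mathtt{HH}*T<:\mathtt{HH}$; $T*\mathtt{HH}<:\mathtt{HH}$; $\mathrm{key}^l(T)<: l$; if $T<: T'$ then $(T)_k<:(T')_k$; if $T<: T'$ then $\{T\}_k<:\{T'\}_k$. *)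

Inductive label : Type := LL | HL | HH.
Inductive affinity : Type := Aone | Ainf.

Section Types.
Variables (Name Key : Type).

Inductive ty : Type :=
| TLab  : label -> ty
| TPair : ty -> ty -> ty
| TKey  : label -> ty -> ty
| TEncS : ty -> Key -> ty
| TEncA : ty -> Key -> ty
| TRef  : label -> label -> affinity -> Name -> Name -> ty
    (* [[ tau^{l,a}_m ; tau^{l',a}_n ]] : TRef l l' a m n *)
| TOr   : ty -> ty -> ty.

Inductive subtype : ty -> ty -> Prop :=
| ST_refl  : forall T, subtype T T
| ST_HL    : forall T, subtype T (TLab HL)
| ST_trans : forall T T' T'', subtype T T' -> subtype T' T'' -> subtype T T''
| ST_LLpair : subtype (TPair (TLab LL) (TLab LL)) (TLab LL)
| ST_pair  : forall T1 T1' T2 T2', subtype T1 T1' -> subtype T2 T2' ->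
               subtype (TPair T1 T2) (TPair T1' T2')
| ST_HHl   : forall T, subtype (TPair (TLab HH) T) (TLab HH)
| ST_HHr   : forall T, subtype (TPair T (TLab HH)) (TLab HH)
| ST_key   : forall l T, subtype (TKey l T) (TLab l)
| ST_encS  : forall T T' k, subtype T T' -> subtype (TEncS T k) (TEncS T' k)
| ST_encA  : forall T T' k, subtype T T' -> subtype (TEncA T k) (TEncA T' k).

Definition is_pair (T : ty) : Prop := exists T1 T2, T = TPair T1 T2.
Definition is_union (T : ty) : Prop := exists T1 T2, T = TOr T1 T2.
End Types.

Arguments TLab {Name Key}.
Arguments TPair {Name Key}.
Arguments TKey {Name Key}.
Arguments TEncS {Name Key}.
Arguments TEncA {Name Key}.
Arguments TRef {Name Key}.
Arguments TOr {Name Key}.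
Arguments subtype {Name Key}.
Arguments is_pair {Name Key}.
Arguments is_union {Name Key}.

(* Apart from reflexivity, transitivity and [T <: HL], every subtyping rule
   relates types of the same shape, except the rules collapsing a type into a
   label ([LL * LL <: LL], [HH * T <: HH], [T * HH <: HH], [key^l(T) <: l]).
   So each claim is an invariant of derivations: a description of the
   supertypes of a type that is stable as a derivation moves upward, or of its
   subtypes, stable downward.  The subtypes of [LL] and [HH] are exactly the
   types built by the collapsing rules. *)


Section Subtyping.

Context {Name Key : Type}.
Implicit Types S T U V : ty Name Key.

Definition upper_trivial S : Prop :=
  match S with
  | TLab _ | TRef _ _ _ _ _ | TOr _ _ => True
  | _ => False
  end.

Definition minimal U : Prop :=
  match U with
  | TKey _ _ | TRef _ _ _ _ _ | TOr _ _ => True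
  | _ => False
  end.

Lemma subtype_upper_trivial {S U} :
  subtype S U -> upper_trivial S -> U = S \/ U = TLab HL.
Proof.
  induction 1 as [| | S V U _ IH1 _ IH2 | | | | | | |]; simpl; try tauto.
  intros HS; destruct (IH1 HS) as [-> | ->]; auto.
  destruct (IH2 I) as [-> | ->]; auto.
Qed.

Lemma subtype_from_HL {U} : subtype (TLab HL) U -> U = TLab HL.
Proof. intros H; destruct (subtype_upper_trivial H I); auto. Qed.

Lemma subtype_minimal {S U} : subtype S U -> minimal U -> S = U.
Proof.
  induction 1 as [| | S V U _ IH1 _ IH2 | | | | | | |]; simpl; try tauto.
  intros HU; rewrite <- (IH2 HU) in HU |- *; exact (IH1 HU).
Qed.

Definition lab_or_pair S : Prop :=
  match S with
  | TLab _ | TPair _ _ => True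
  | _ => False
  end.

Lemma subtype_lab_or_pair {S U} : subtype S U -> lab_or_pair S -> lab_or_pair U.
Proof. induction 1; simpl; tauto. Qed.

Lemma subtype_to_pair S T1 T2 :
  subtype S (TPair T1 T2) ->
  exists S1 S2, S = TPair S1 S2 /\ subtype S1 T1 /\ subtype S2 T2.
Proof.
  intros H; remember (TPair T1 T2) as U eqn:EU; revert T1 T2 EU.
  induction H as [| | S V U _ IH1 _ IH2 | | | | | | |];
    intros; subst; try discriminate.
  - eauto 7 using @subtype.
  - destruct (IH2 _ _ eq_refl) as (V1 & V2 & -> & HV1 & HV2).
    destruct (IH1 _ _ eq_refl) as (S1 & S2 & -> & HS1 & HS2).
    eauto 7 using @subtype.
  - injection EU as -> ->; eauto.
Qed.

Lemma subtype_to_encS S T k :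
  subtype S (TEncS T k) -> exists S', subtype S' T /\ S = TEncS S' k.
Proof.
  intros H; remember (TEncS T k) as U eqn:EU; revert T EU.
  induction H as [| | S V U _ IH1 _ IH2 | | | | | | |];
    intros; subst; try discriminate.
  - eauto using @subtype.
  - destruct (IH2 _ eq_refl) as (V' & HV & ->).
    destruct (IH1 _ eq_refl) as (S' & HS & ->).
    eauto using @subtype.
  - injection EU as -> ->; eauto.
Qed.

Lemma subtype_to_encA S T k :
  subtype S (TEncA T k) -> exists S', subtype S' T /\ S = TEncA S' k.
Proof.
  intros H; remember (TEncA T k) as U eqn:EU; revert T EU.
  induction H as [| | S V U _ IH1 _ IH2 | | | | | | |];
    intros; subst; try discriminate.
  - eauto using @subtype.
  - destruct (IH2 _ eq_refl) as (V' & HV & ->).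
    destruct (IH1 _ eq_refl) as (S' & HS & ->).
    eauto using @subtype.
  - injection EU as -> ->; eauto.
Qed.

Lemma subtype_from_encS T U k :
  subtype (TEncS T k) U -> U = TLab HL \/ exists U', subtype T U' /\ U = TEncS U' k.
Proof.
  intros H; remember (TEncS T k) as S eqn:ES; revert T ES.
  induction H as [| | S V U _ IH1 HVU IH2 | | | | | | |];
    intros; subst; try discriminate; auto.
  - eauto using @subtype.
  - destruct (IH1 _ eq_refl) as [-> | (V' & HV & ->)].
    + left; exact (subtype_from_HL HVU).
    + destruct (IH2 _ eq_refl) as [-> | (U' & HU & ->)]; eauto using @subtype.
  - injection ES as -> ->; eauto.
Qed.

Lemma subtype_from_encA T U k :
  subtype (TEncA T k) U -> U = TLab HL \/ exists U', subtype T U' /\ U = TEncA U' k.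
Proof.
  intros H; remember (TEncA T k) as S eqn:ES; revert T ES.
  induction H as [| | S V U _ IH1 HVU IH2 | | | | | | |];
    intros; subst; try discriminate; auto.
  - eauto using @subtype.
  - destruct (IH1 _ eq_refl) as [-> | (V' & HV & ->)].
    + left; exact (subtype_from_HL HVU).
    + destruct (IH2 _ eq_refl) as [-> | (U' & HU & ->)]; eauto using @subtype.
  - injection ES as -> ->; eauto.
Qed.

Lemma is_union_dec T : is_union T \/ ~ is_union T.
Proof.
  destruct T; [.. | left; unfold is_union; eauto];
    right; intros (? & ? & E); discriminate E.
Qed.

Lemma subtype_union S U :
  subtype S U -> U = TLab HL \/ S = U \/ (~ is_union S /\ ~ is_union U).
Proof.
  intros H; destruct (is_union_dec S) as [(S1 & S2 & ->) | HS].
  - destruct (subtype_upper_trivial H I); auto.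
  - destruct (is_union_dec U) as [(U1 & U2 & ->) | HU]; auto.
    right; left; exact (subtype_minimal H I).
Qed.

Inductive below_LL : ty Name Key -> Prop :=
| below_LL_lab : below_LL (TLab LL)
| below_LL_key : forall S, below_LL (TKey LL S)
| below_LL_pair : forall S1 S2, below_LL S1 -> below_LL S2 -> below_LL (TPair S1 S2).

Inductive below_HH : ty Name Key -> Prop :=
| below_HH_lab : below_HH (TLab HH)
| below_HH_key : forall S, below_HH (TKey HH S)
| below_HH_pairl : forall S1 S2, below_HH S1 -> below_HH (TPair S1 S2)
| below_HH_pairr : forall S1 S2, below_HH S2 -> below_HH (TPair S1 S2).

Lemma below_LL_subtype {S U} : subtype S U -> below_LL U -> below_LL S.
Proof. induction 1; inversion 1; subst; auto using @below_LL. Qed.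

Lemma subtype_LL S : subtype S (TLab LL) <-> below_LL S.
Proof.
  split.
  - intros H; exact (below_LL_subtype H below_LL_lab).
  - induction 1; eauto using @subtype.
Qed.

Lemma below_HH_subtype {S U} : subtype S U -> below_HH U -> below_HH S.
Proof. induction 1; inversion 1; subst; auto using @below_HH. Qed.

Lemma subtype_HH S : subtype S (TLab HH) <-> below_HH S.
Proof.
  split.
  - intros H; exact (below_HH_subtype H below_HH_lab).
  - induction 1; eauto using @subtype.
Qed.

End Subtyping.

Theorem lemmaB1 (Name Key : Type) :
  (* (1) *)
  (forall T : ty Name Key, subtype (TLab HL) T -> T = TLab HL) /\
  (* (2) *)
  (forall T : ty Name Key, subtype (TLab LL) T -> T = TLab LL \/ T = TLab HL) /\
  (* (3) *)
  (forall T : ty Name Key, subtype (TLab HH) T -> T = TLab HH \/ T = TLab HL) /\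
  (* (4) *)
  (forall T1 T2 T3 : ty Name Key, subtype (TPair T1 T2) T3 ->
     (T3 = TLab LL \/ T3 = TLab HL \/ T3 = TLab HH) \/
     exists T4 T5, T3 = TPair T4 T5) /\
  (* (5) *)
  (forall T T1 T2 : ty Name Key, subtype T (TPair T1 T2) ->
     exists T1' T2', T = TPair T1' T2' /\ subtype T1' T1 /\ subtype T2' T2) /\
  (* (6) *)
  (forall T1 T2 : ty Name Key, subtype (TPair T1 T2) (TLab LL) ->
     subtype T1 (TLab LL) /\ subtype T2 (TLab LL)) /\
  (* (7) *)
  (forall T1 T2 : ty Name Key, subtype (TPair T1 T2) (TLab HH) ->
     subtype T1 (TLab HH) \/ subtype T2 (TLab HH)) /\
  (* (8) *)
  (forall (T1 T2 : ty Name Key) (k : Key), subtype T1 (TEncS T2 k) ->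
     exists T3, subtype T3 T2 /\ T1 = TEncS T3 k) /\
  (* (9) *)
  (forall (T1 T2 : ty Name Key) (k : Key), subtype T1 (TEncA T2 k) ->
     exists T3, subtype T3 T2 /\ T1 = TEncA T3 k) /\
  (* (10) *)
  (forall (T1 T2 : ty Name Key) (k : Key), subtype (TEncS T1 k) T2 ->
     T2 = TLab HL \/ exists T3, subtype T1 T3 /\ T2 = TEncS T3 k) /\
  (* (11) *)
  (forall (T1 T2 : ty Name Key) (k : Key), subtype (TEncA T1 k) T2 ->
     T2 = TLab HL \/ exists T3, subtype T1 T3 /\ T2 = TEncA T3 k) /\
  (* (12) *)
  (forall (T : ty Name Key) (l l' : label) (a : affinity) (m n : Name),
     subtype T (TRef l l' a m n) -> T = TRef l l' a m n) /\
  (* (13) *)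
  (forall (T : ty Name Key) (l l' : label) (a : affinity) (m n : Name),
     subtype (TRef l l' a m n) T -> T = TLab HL \/ T = TRef l l' a m n) /\
  (* (14) *)
  (forall T1 T2 : ty Name Key, subtype T1 T2 ->
     T2 = TLab HL \/ T1 = T2 \/ (~ is_union T1 /\ ~ is_union T2)) /\
  (* (15) *)
  (forall (T T' : ty Name Key) (l : label), subtype T (TKey l T') -> T = TKey l T') /\
  (* (16) *)
  (forall T : ty Name Key, subtype T (TLab LL) ->
     is_pair T \/ (exists T', T = TKey LL T') \/ T = TLab LL) /\
  (* (17) *)
  (forall T : ty Name Key, subtype T (TLab HH) ->
     is_pair T \/ (exists T', T = TKey HH T') \/ T = TLab HH).
Proof.
  repeat apply conj.
  - intros T H; exact (subtype_from_HL H).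
  - intros T H; exact (subtype_upper_trivial H I).
  - intros T H; exact (subtype_upper_trivial H I).
  - intros T1 T2 T3 H; pose proof (subtype_lab_or_pair H I) as shape.
    destruct T3 as [[] | T4 T5 | | | | |]; simpl in shape; try contradiction; eauto.
  - exact subtype_to_pair.
  - intros T1 T2 H; apply subtype_LL in H; inversion H; split; apply subtype_LL; assumption.
  - intros T1 T2 H; apply subtype_HH in H; inversion H; [left | right];
      apply subtype_HH; assumption.
  - exact subtype_to_encS.
  - exact subtype_to_encA.
  - exact subtype_from_encS.
  - exact subtype_from_encA.
  - intros T l l' a m n H; exact (subtype_minimal H I).
  - intros T l l' a m n H; destruct (subtype_upper_trivial H I); auto.
  - exact subtype_union.
  - intros T T' l H; exact (subtype_minimal H I).
  - intros T H; apply subtype_LL in H; inversion H; unfold is_pair; eauto.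
  - intros T H; apply subtype_HH in H; inversion H; unfold is_pair; eauto.
Qed.
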